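(* Let $f:\mathbb Z^+\to[0,\infty)$ be nondecreasing with $f(0)=0$ and $f(z)>0$ for $z>0$, and let $\mathcal H(\varrho)=\mathbf E^\varrho f(\omega)$ for $\varrho\in(0,\infty)$. If $f$ is convex (respectively concave), then $\mathcal H$ is convex (respectively concave) on $(0,\infty)$. Moreover, in this case $\mathcal H''(\varrho)>0$ (respectively $\mathcal H''(\varrho)<0$) for all $\varrho>0$ if and only if $f$ is not a linear function.
   Context: Set $f(0)!=1$, $f(z)!=\prod_{y=1}^zf(y)$. Let $\bar\theta=\lim_{z\to\infty}\log f(z)$ (assumed $>-\infty$, automatically true here). For $\theta<\bar\theta$, $Z(\theta)=\sum_{z\ge0}e^{\theta z}/f(z)!<\infty$ and $\mu^\theta(z)=e^{\theta z}/(Z(\theta)f(z)!)$, $z\in\mathbb Z^+$. The mean $\varrho(\theta)=\sum_zz\mu^\theta(z)$ is a strictly increasing bijection onto $(0,\infty)$; $\mathbf E^\varrho$ denotes expectation of $\omega\sim\mu^{\theta(\varrho)}$. ($\mathcal H$ is the hydrodynamic flux of the totally asymmetric zero range process with jump rate $f$.) *)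

From Stdlib Require Import Reals ClassicalEpsilon.
From Coquelicot Require Import Coquelicot.
Open Scope R_scope.

Fixpoint ffact (f : nat -> R) (z : nat) : R :=
  match z with
  | O => 1
  | S n => ffact f n * f (S n)
  end.

Definition thetabar (f : nat -> R) : Rbar := Lim_seq (fun z => ln (f z)).

Definition Zpart (f : nat -> R) (th : R) : R :=
  Series (fun z => exp (th * INR z) / ffact f z).

Definition mu (f : nat -> R) (th : R) (z : nat) : R :=
  exp (th * INR z) / (Zpart f th * ffact f z).

Definition rho_of (f : nat -> R) (th : R) : R :=
  Series (fun z => INR z * mu f th z).

Definition theta_of (f : nat -> R) (r : R) : R :=
  epsilon (inhabits 0) (fun th => Rbar_lt th (thetabar f) /\ rho_of f th = r).

Definition Hflux (f : nat -> R) (r : R) : R :=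
  Series (fun z => f z * mu f (theta_of f r) z).

Definition fconvex (f : nat -> R) : Prop :=
  forall z : nat, f (S z) - f z <= f (S (S z)) - f (S z).
Definition fconcave (f : nat -> R) : Prop :=
  forall z : nat, f (S (S z)) - f (S z) <= f (S z) - f z.
Definition flinear (f : nat -> R) : Prop :=
  exists c : R, forall z : nat, f z = c * INR z.

Definition convex_pos (h : R -> R) : Prop :=
  forall x y t, 0 < x -> 0 < y -> 0 <= t <= 1 ->
    h (t * x + (1 - t) * y) <= t * h x + (1 - t) * h y.
Definition concave_pos (h : R -> R) : Prop :=
  forall x y t, 0 < x -> 0 < y -> 0 <= t <= 1 ->
    t * h x + (1 - t) * h y <= h (t * x + (1 - t) * y).

From Stdlib Require Import Reals Lra Lia Psatz Classical ClassicalEpsilon Ranalysis5.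
From Coquelicot Require Import Coquelicot.
Open Scope R_scope.

(* Write x = e^th.  The moments S_k(th) = sum_z z^k x^z / f(z)! are power series in x
   that converge for th < thetabar, with S_k' = S_(k+1).  Hence the mean rho = S_1 / S_0
   has derivative the variance V, whose derivative is the third cumulant K, and rho is an
   increasing bijection onto (0, oo).  The shift identity E f(w) g(w) = e^th E g(w + 1)
   gives H(rho) = e^th(rho), so H' = e^th / V and H'' = e^th (V - K) / V^3.  The same
   identity shows e^th (V - K) = V E[r(w) w^2], where r is the residual of the
   least-squares affine fit of f against w.  If f is convex so is r, and being orthogonal
   to 1 and w it has sign pattern (+, -, +); a quadratic with the same sign pattern then
   shows E[r(w) w^2] > 0 unless r = 0, that is, unless f is linear. *)

Lemma is_series_ge_partial_sum (a : nat -> R) (l : R) (N : nat) :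
  is_series a l -> (forall n, 0 <= a n) -> sum_f_R0 a N <= l.
Proof. intros Hl Ha. apply sum_incr; [apply is_series_Reals|]; assumption. Qed.

Lemma is_series_ge_term (a : nat -> R) (l : R) (k : nat) :
  is_series a l -> (forall n, 0 <= a n) -> a k <= l.
Proof.
  intros Hl Ha. apply Rle_trans with (sum_f_R0 a k).
  - destruct k as [|k]; simpl; [lra|]. pose proof (cond_pos_sum a k Ha). lra.
  - now apply is_series_ge_partial_sum.
Qed.

Lemma is_series_nonneg (a : nat -> R) (l : R) :
  is_series a l -> (forall n, 0 <= a n) -> 0 <= l.
Proof. intros Hl Ha. pose proof (is_series_ge_term a l 0 Hl Ha). pose proof (Ha 0%nat). lra. Qed.

Lemma is_series_tail (a : nat -> R) (l : R) (N : nat) :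
  is_series a l -> is_series (fun k => a (S N + k)%nat) (l - sum_f_R0 a N).
Proof.
  intros Hl. apply is_series_incr_n; [lia|]. simpl pred. rewrite sum_n_Reals.
  change (plus (l - sum_f_R0 a N) (sum_f_R0 a N)) with (l - sum_f_R0 a N + sum_f_R0 a N).
  now replace (l - sum_f_R0 a N + sum_f_R0 a N) with l by ring.
Qed.

Lemma is_series_pos (a : nat -> R) (l : R) (k : nat) :
  is_series a l -> (forall n, 0 <= a n) -> 0 < a k -> 0 < l.
Proof. intros Hl Ha Hk. pose proof (is_series_ge_term a l k Hl Ha). lra. Qed.

Lemma is_series_lin2 (a b : nat -> R) (la lb c d : R) :
  is_series a la -> is_series b lb ->
  is_series (fun n => c * a n + d * b n) (c * la + d * lb).
Proof.
  intros Ha Hb.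
  exact (is_series_plus _ _ _ _ (is_series_scal_l c _ _ Ha) (is_series_scal_l d _ _ Hb)).
Qed.

Lemma is_series_lin3 (a b e : nat -> R) (la lb le c d g : R) :
  is_series a la -> is_series b lb -> is_series e le ->
  is_series (fun n => c * a n + d * b n + g * e n) (c * la + d * lb + g * le).
Proof.
  intros Ha Hb He.
  exact (is_series_plus _ _ _ _ (is_series_lin2 _ _ _ _ c d Ha Hb) (is_series_scal_l g _ _ He)).
Qed.

Lemma exp_le_compat (a b : R) : a <= b -> exp a <= exp b.
Proof. intros [H|H]; [left; now apply exp_increasing | subst; lra]. Qed.

Lemma exp_mul_INR (th : R) (z : nat) : exp (th * INR z) = exp th ^ z.
Proof.
  induction z as [|z IH]; [simpl; rewrite Rmult_0_r; apply exp_0|].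
  rewrite S_INR, Rmult_plus_distr_l, Rmult_1_r, exp_plus, IH. simpl. ring.
Qed.

Lemma MVT_is_derive (g g' : R -> R) (a b : R) :
  a <= b -> (forall x, a <= x <= b -> is_derive g x (g' x)) ->
  exists c, a <= c <= b /\ g b - g a = g' c * (b - a).
Proof.
  intros Hab Hd.
  destruct (MVT_gen g a b g') as [c [Hc E]];
    rewrite ?Rmin_left, ?Rmax_right in * by lra.
  - intros x Hx. apply Hd. lra.
  - intros x Hx. apply derivable_continuous_pt. exists (g' x).
    apply is_derive_Reals, Hd. lra.
  - eauto.
Qed.

Lemma nondecreasing_of_derive_nonneg (g g' : R -> R) (a b : R) :
  a <= b -> (forall x, a <= x <= b -> is_derive g x (g' x)) ->
  (forall x, a <= x <= b -> 0 <= g' x) -> g a <= g b.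
Proof.
  intros Hab Hd Hpos. destruct (MVT_is_derive g g' a b Hab Hd) as [c [Hc E]].
  pose proof (Hpos c Hc). nra.
Qed.

Lemma increasing_of_derive_pos (g g' : R -> R) (a b : R) :
  a < b -> (forall x, a <= x <= b -> is_derive g x (g' x)) ->
  (forall x, a <= x <= b -> 0 < g' x) -> g a < g b.
Proof.
  intros Hab Hd Hpos. destruct (MVT_is_derive g g' a b (Rlt_le _ _ Hab) Hd) as [c [Hc E]].
  pose proof (Hpos c Hc). nra.
Qed.

Lemma convex_pos_of_derive2 (h h' h'' : R -> R) :
  (forall x, 0 < x -> is_derive h x (h' x)) -> (forall x, 0 < x -> is_derive h' x (h'' x)) ->
  (forall x, 0 < x -> 0 <= h'' x) -> convex_pos h.
Proof.
  intros Dh Dh' Hpos.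
  assert (Hmono : forall a b, 0 < a -> a <= b -> h' a <= h' b).
  { intros a b Ha Hab. apply (nondecreasing_of_derive_nonneg h' h''); auto;
      intros x Hx; [apply Dh' | apply Hpos]; lra. }
  assert (Hsorted : forall x y t, 0 < x -> x <= y -> 0 <= t <= 1 ->
            h (t * x + (1 - t) * y) <= t * h x + (1 - t) * h y).
  { intros x y t Hx Hxy Ht. set (z := t * x + (1 - t) * y).
    assert (Hz : x <= z <= y) by (unfold z; split; nra).
    destruct (MVT_is_derive h h' x z) as [c1 [Hc1 E1]]; [lra | intros u Hu; apply Dh; lra |].
    destruct (MVT_is_derive h h' z y) as [c2 [Hc2 E2]]; [lra | intros u Hu; apply Dh; lra |].
    pose proof (Hmono c1 c2 ltac:(lra) ltac:(lra)).
    assert (Ezx : z - x = (1 - t) * (y - x)) by (unfold z; ring).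
    assert (Eyz : y - z = t * (y - x)) by (unfold z; ring).
    rewrite Ezx in E1. rewrite Eyz in E2.
    (* [t h x + (1 - t) h y - h z = t (1 - t) (y - x) (h' c2 - h' c1)] *)
    assert (0 <= t * (1 - t) * (y - x) * (h' c2 - h' c1))
      by (apply Rmult_le_pos; [apply Rmult_le_pos; [nra | lra] | lra]).
    nra. }
  intros x y t Hx Hy Ht. destruct (Rle_dec x y) as [Hxy|Hyx].
  - auto.
  - replace (t * x + (1 - t) * y) with ((1 - t) * y + (1 - (1 - t)) * x) by ring.
    pose proof (Hsorted y x (1 - t) Hy ltac:(lra) ltac:(lra)). lra.
Qed.

Lemma concave_pos_of_derive2 (h h' h'' : R -> R) :
  (forall x, 0 < x -> is_derive h x (h' x)) -> (forall x, 0 < x -> is_derive h' x (h'' x)) ->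
  (forall x, 0 < x -> h'' x <= 0) -> concave_pos h.
Proof.
  intros Dh Dh' Hneg x y t Hx Hy Ht.
  enough (- h (t * x + (1 - t) * y) <= t * - h x + (1 - t) * - h y) by lra.
  apply (convex_pos_of_derive2 (fun u => - h u) (fun u => - h' u) (fun u => - h'' u)); auto.
  - intros u Hu. exact (is_derive_opp h u (h' u) (Dh u Hu)).
  - intros u Hu. exact (is_derive_opp h' u (h'' u) (Dh' u Hu)).
  - intros u Hu. specialize (Hneg u Hu). lra.
Qed.

(** * Convex sequences *)

Lemma exists_least_nat (P : nat -> Prop) :
  (exists n, P n) -> exists m, P m /\ forall k, P k -> (m <= k)%nat.
Proof.
  intros Hex.
  destruct (Wf_nat.dec_inh_nat_subset_has_unique_least_element P (fun n => classic (P n)) Hex)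
    as [m [[Pm Hmin] _]].
  eauto.
Qed.

Lemma seq_le_of_steps (r : nat -> R) (a b : nat) :
  (a <= b)%nat -> (forall j, (a <= j < b)%nat -> r j <= r (S j)) -> r a <= r b.
Proof.
  intros Hab Hstep. induction Hab as [|b Hab IH]; [lra|].
  apply Rle_trans with (r b).
  - apply IH. intros j Hj. apply Hstep. lia.
  - apply Hstep. lia.
Qed.

Lemma fconvex_steps_mono (r : nat -> R) (i j : nat) :
  fconvex r -> (i <= j)%nat -> r (S i) - r i <= r (S j) - r j.
Proof.
  intros Hc Hij. induction Hij as [|j Hij IH]; [lra|]. specialize (Hc j). lra.
Qed.

Lemma fconvex_le_max (r : nat -> R) (a z b : nat) :
  fconvex r -> (a <= z <= b)%nat -> r z <= Rmax (r a) (r b).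
Proof.
  intros Hc Hz.
  destruct (Rle_lt_dec (r z) (r (S z))) as [Hup|Hdown].
  - apply Rle_trans with (r b); [|apply Rmax_r].
    apply seq_le_of_steps; [lia|]. intros j Hj.
    pose proof (fconvex_steps_mono r z j Hc ltac:(lia)). lra.
  - apply Rle_trans with (r a); [|apply Rmax_l].
    enough (- r a <= - r z) by lra.
    apply (seq_le_of_steps (fun j => - r j)); [lia|]. intros j Hj.
    pose proof (fconvex_steps_mono r j z Hc ltac:(lia)). lra.
Qed.

Lemma fconvex_neg_between (r : nat -> R) (m z n : nat) :
  fconvex r -> r m < 0 -> r n < 0 -> (m <= z <= n)%nat -> r z < 0.
Proof.
  intros Hc Hm Hn Hz. pose proof (fconvex_le_max r m z n Hc Hz).
  unfold Rmax in *. destruct (Rle_dec (r m) (r n)); lra.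
Qed.

Lemma INR_le_sub_1_of_lt (z m : nat) : (z < m)%nat -> INR z <= INR m - 1.
Proof. intros H. apply le_INR in H. rewrite S_INR in H. lra. Qed.

Section ConvexOrthogonal.

Variables w r : nat -> R.
Hypothesis w_pos : forall z, 0 < w z.
Hypothesis r_convex : fconvex r.
Hypothesis r_orth0 : is_series (fun z => w z * r z) 0.
Hypothesis r_orth1 : is_series (fun z => w z * r z * INR z) 0.

Lemma orthogonal_has_neg : (exists z, r z <> 0) -> exists z, r z < 0.
Proof.
  intros [z0 Hz0]. apply NNPP. intros Hno.
  assert (Hnn : forall z, 0 <= r z) by (intro z; apply Rnot_lt_le; intro; apply Hno; eauto).
  assert (0 < 0); [|lra].
  apply (is_series_pos _ 0 z0 r_orth0 (fun z => Rmult_le_pos _ _ (Rlt_le _ _ (w_pos z)) (Hnn z))).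
  specialize (w_pos z0). specialize (Hnn z0). apply Rmult_lt_0_compat; lra.
Qed.

Lemma orthogonal_eventually_nonneg (m : nat) :
  r m < 0 -> (forall z, (z < m)%nat -> 0 <= r z) ->
  exists B, forall z, (B <= z)%nat -> 0 <= r z.
Proof.
  intros Hm Hbefore. apply NNPP. intros Hno.
  assert (Hafter : forall z, (m <= z)%nat -> r z < 0).
  { intros z Hz. apply NNPP. intros Hz'.
    apply Hno. exists z. intros y Hy. apply Rnot_lt_le. intros Hy'.
    apply Hz'. apply (fconvex_neg_between r m z y); auto; lia. }
  set (s := INR m - /2).
  assert (Hs : is_series (fun z => s * (w z * r z) + -1 * (w z * r z * INR z)) (s * 0 + -1 * 0))
    by (apply is_series_lin2; assumption).
  assert (0 < s * 0 + -1 * 0); [|lra].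
  apply (is_series_pos _ _ m Hs).
  - intros z. specialize (w_pos z).
    destruct (Nat.lt_ge_cases z m) as [Hz|Hz].
    + pose proof (INR_le_sub_1_of_lt z m Hz). specialize (Hbefore z Hz).
      assert (0 <= w z * r z) by nra. unfold s. nra.
    + specialize (Hafter z Hz). apply le_INR in Hz.
      assert (w z * r z < 0) by nra. unfold s. nra.
  - specialize (w_pos m). specialize (Hafter m (le_n m)).
    assert (w m * r m < 0) by nra. unfold s. nra.
Qed.

Lemma orthogonal_neg_interval :
  (exists z, r z <> 0) ->
  exists m n, (m <= n)%nat /\ forall z, r z < 0 <-> (m <= z <= n)%nat.
Proof.
  intros Hnz.
  destruct (exists_least_nat _ (orthogonal_has_neg Hnz)) as [m [Hm Hmmin]].
  assert (Hbefore : forall z, (z < m)%nat -> 0 <= r z).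
  { intros z Hz. apply Rnot_lt_le. intros Hr. specialize (Hmmin z Hr). lia. }
  destruct (orthogonal_eventually_nonneg m Hm Hbefore) as [B HB].
  destruct (exists_least_nat (fun n => forall z, r z < 0 -> (z <= n)%nat)) as [n [Hn Hnmin]].
  { exists B. intros z Hz. apply Nat.nlt_ge. intros HzB. specialize (HB z ltac:(lia)). lra. }
  assert (Hmn : (m <= n)%nat) by auto.
  assert (Hrn : r n < 0).
  { destruct (Nat.eq_dec m n) as [<-|Hne]; [assumption|].
    apply Rnot_le_lt. intros Hrn.
    assert (Hpred : forall z, r z < 0 -> (z <= Nat.pred n)%nat).
    { intros z Hz. pose proof (Hn z Hz). destruct (Nat.eq_dec z n); [subst; lra | lia]. }
    specialize (Hnmin _ Hpred). pose proof (Hpred m Hm). lia. }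
  exists m, n. split; [exact Hmn|]. intros z. split.
  - intros Hz. split; [apply Hmmin | apply Hn]; exact Hz.
  - intros Hz. now apply (fconvex_neg_between r m z n).
Qed.

Lemma convex_orthogonal_second_moment_pos (l2 : R) :
  is_series (fun z => w z * r z * INR z ^ 2) l2 -> (exists z, r z <> 0) -> 0 < l2.
Proof.
  intros Hl2 Hnz. destruct (orthogonal_neg_interval Hnz) as [m [n [Hmn Hneg]]].
  assert (Hout : forall z, ~ (m <= z <= n)%nat -> 0 <= r z)
    by (intros z Hz; apply Rnot_lt_le; intros Hr; now apply Hz, Hneg).
  set (s1 := INR m - /2). set (s2 := INR n + /2).
  assert (Hq : is_series (fun z => 1 * (w z * r z * INR z ^ 2) + - (s1 + s2) * (w z * r z * INR z)
                                     + s1 * s2 * (w z * r z))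
                         (1 * l2 + - (s1 + s2) * 0 + s1 * s2 * 0))
    by (apply is_series_lin3; assumption).
  assert (0 < 1 * l2 + - (s1 + s2) * 0 + s1 * s2 * 0); [|lra].
  assert (Hmn' : INR m <= INR n) by (apply le_INR; lia).
  apply (is_series_pos _ _ m Hq).
  - intros z. specialize (w_pos z).
    replace (1 * (w z * r z * INR z ^ 2) + - (s1 + s2) * (w z * r z * INR z)
             + s1 * s2 * (w z * r z))
      with (w z * r z * ((INR z - s1) * (INR z - s2))) by ring.
    unfold s1, s2.
    destruct (Nat.lt_ge_cases z m) as [Hz|Hz]; [|destruct (Nat.le_gt_cases z n) as [Hz'|Hz']].
    + pose proof (INR_le_sub_1_of_lt z m Hz). specialize (Hout z ltac:(lia)).
      assert (0 <= w z * r z) by nra.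
      assert (0 <= (INR z - (INR m - /2)) * (INR z - (INR n + /2))) by nra. nra.
    + specialize (proj2 (Hneg z) (conj Hz Hz')) as Hr. apply le_INR in Hz, Hz'.
      assert (w z * r z < 0) by nra.
      assert ((INR z - (INR m - /2)) * (INR z - (INR n + /2)) < 0) by nra. nra.
    + pose proof (INR_le_sub_1_of_lt n z Hz'). specialize (Hout z ltac:(lia)).
      assert (0 <= w z * r z) by nra.
      assert (0 <= (INR z - (INR m - /2)) * (INR z - (INR n + /2))) by nra. nra.
  - specialize (w_pos m). specialize (proj2 (Hneg m) (conj (le_n m) Hmn)) as Hr.
    assert (w m * r m < 0) by nra. unfold s1, s2.
    assert ((INR m - (INR m - /2)) * (INR m - (INR n + /2)) < 0) by nra. nra.
Qed.

End ConvexOrthogonal.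

(** * Moments *)

Section Flux.

Variable f : nat -> R.
Hypothesis f_mono : forall z, f z <= f (S z).
Hypothesis f_0 : f 0%nat = 0.
Hypothesis f_pos : forall z, (0 < z)%nat -> 0 < f z.

Lemma ffact_pos (z : nat) : 0 < ffact f z.
Proof. induction z; simpl; [lra|]. apply Rmult_lt_0_compat; auto. apply f_pos; lia. Qed.

Lemma f_le (m n : nat) : (m <= n)%nat -> f m <= f n.
Proof. intros H. induction H as [|n H IH]; [lra|]. specialize (f_mono n). lra. Qed.

Lemma ffact_ge_pow (n k : nat) : ffact f n * f n ^ k <= ffact f (n + k).
Proof.
  induction k as [|k IH]; [rewrite Nat.add_0_r; simpl; lra|].
  rewrite Nat.add_succ_r. simpl.
  assert (f n <= f (S (n + k))) by (apply f_le; lia).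
  assert (0 <= f n) by (destruct n; [rewrite f_0 | apply Rlt_le, f_pos]; lia || lra).
  assert (0 <= ffact f n * f n ^ k)
    by (apply Rmult_le_pos; [apply Rlt_le, ffact_pos | apply pow_le; lra]).
  nra.
Qed.

Lemma ln_f_le_thetabar (z : nat) : (0 < z)%nat -> Rbar_le (ln (f z)) (thetabar f).
Proof.
  intros Hz. unfold thetabar. rewrite <- (Lim_seq_const (ln (f z))).
  apply Lim_seq_le_loc. exists z. intros n Hn.
  apply ln_le; [now apply f_pos | now apply f_le].
Qed.

Definition admissible (th : R) : Prop := Rbar_lt th (thetabar f).

Lemma admissible_le (a b : R) : a <= b -> admissible b -> admissible a.
Proof. unfold admissible. intros Hab Hb. destruct (thetabar f); simpl in *; auto; lra. Qed.

Lemma admissible_lt_ln_f1 (th : R) : th < ln (f 1%nat) -> admissible th.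
Proof.
  unfold admissible. pose proof (ln_f_le_thetabar 1 ltac:(lia)).
  destruct (thetabar f); simpl in *; auto; lra.
Qed.

Lemma exists_f_gt_exp (th : R) : admissible th -> exists n, (0 < n)%nat /\ exp th < f n.
Proof.
  intros Hth. apply NNPP. intros Hno.
  assert (Hle : Rbar_le (thetabar f) th).
  { unfold thetabar. rewrite <- (Lim_seq_const th). apply Lim_seq_le_loc.
    exists 1%nat. intros n Hn. apply Rnot_lt_le. intros Hlt. apply Hno. exists n.
    split; [lia|]. rewrite <- (exp_ln (f n)) by (apply f_pos; lia). now apply exp_increasing. }
  unfold admissible in Hth. destruct (thetabar f); simpl in *; lra.
Qed.

Definition coef (k z : nat) : R := INR z ^ k / ffact f z.
Definition moment (k : nat) (th : R) : R := PSeries (coef k) (exp th).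

Lemma coef_nonneg (k z : nat) : 0 <= coef k z.
Proof. apply Rdiv_le_0_compat; [apply pow_le, pos_INR | apply ffact_pos]. Qed.

Lemma coef_succ (k : nat) : forall z, coef (S k) z = PS_incr_1 (PS_derive (coef k)) z.
Proof.
  intros [|z]; unfold coef, PS_derive, PS_incr_1; [unfold zero; simpl; lra|].
  change (INR (S z) ^ S k) with (INR (S z) * INR (S z) ^ k). unfold Rdiv. ring.
Qed.

Lemma CV_radius_coef (k : nat) : CV_radius (coef k) = CV_radius (coef 0).
Proof.
  induction k as [|k IH]; [reflexivity|].
  now rewrite (CV_radius_ext _ _ (coef_succ k)), CV_radius_incr_1, CV_radius_derive.
Qed.

Lemma coef0_geometric_bound (n k : nat) (y : R) : 0 <= y -> 0 < f n ->
  coef 0 (n + k) * y ^ (n + k) <= y ^ n / ffact f n * (y / f n) ^ k.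
Proof.
  intros Hy Hfn.
  pose proof (ffact_ge_pow n k). pose proof (ffact_pos n). pose proof (ffact_pos (n + k)).
  assert (0 < f n ^ k) by (apply pow_lt; lra).
  assert (0 <= y ^ n * y ^ k) by (apply Rmult_le_pos; apply pow_le; lra).
  replace (coef 0 (n + k) * y ^ (n + k)) with (y ^ n * y ^ k * / ffact f (n + k))
    by (unfold coef; rewrite pow_add; simpl; field; lra).
  replace (y ^ n / ffact f n * (y / f n) ^ k) with (y ^ n * y ^ k * / (ffact f n * f n ^ k))
    by (unfold Rdiv; rewrite Rpow_mult_distr, pow_inv; field; split; lra).
  apply Rmult_le_compat_l; [lra|]. apply Rinv_le_contravar; [nra | assumption].
Qed.

Lemma exp_lt_CV_radius (th : R) : admissible th -> Rbar_lt (exp th) (CV_radius (coef 0)).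
Proof.
  intros Hth. destruct (exists_f_gt_exp th Hth) as [n [Hn Hfn]].
  pose proof (exp_pos th). set (y := (exp th + f n) / 2).
  assert (Hq : 0 <= y / f n < 1).
  { split; [apply Rdiv_le_0_compat; unfold y; lra|].
    apply Rmult_lt_reg_r with (f n); [lra|]. unfold Rdiv.
    rewrite Rmult_assoc, Rinv_l, Rmult_1_r, Rmult_1_l; unfold y; lra. }
  assert (Hdisk : CV_disk (coef 0) y).
  { apply (ex_series_incr_n _ n).
    apply (@ex_series_le R_AbsRing R_CompleteNormedModule _
             (fun k => y ^ n / ffact f n * (y / f n) ^ k)).
    - intros k. unfold norm; simpl. unfold abs; simpl. rewrite Rabs_Rabsolu, Rabs_pos_eq.
      + apply coef0_geometric_bound; unfold y; lra.
      + apply Rmult_le_pos; [apply coef_nonneg | apply pow_le; unfold y; lra].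
    - apply (ex_series_scal_l _ (fun k => (y / f n) ^ k)), ex_series_geom.
      rewrite Rabs_pos_eq; lra. }
  apply Rbar_lt_le_trans with y; [simpl; unfold y; lra|].
  now apply (proj1 (Lub_Rbar_correct (CV_disk (coef 0)))).
Qed.

Lemma abs_exp_lt_CV_radius (k : nat) (th : R) :
  admissible th -> Rbar_lt (Rabs (exp th)) (CV_radius (coef k)).
Proof.
  intros Hth. rewrite CV_radius_coef, Rabs_pos_eq by (apply Rlt_le, exp_pos).
  now apply exp_lt_CV_radius.
Qed.

Lemma is_series_moment (k : nat) (th : R) :
  admissible th -> is_series (fun z => coef k z * exp th ^ z) (moment k th).
Proof.
  intros Hth. apply Series_correct, ex_series_Rabs, CV_disk_inside.
  now apply abs_exp_lt_CV_radius.
Qed.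

Lemma moment_derive (k : nat) (th : R) :
  admissible th -> is_derive (moment k) th (moment (S k) th).
Proof.
  intros Hth.
  replace (moment (S k) th) with (exp th * PSeries (PS_derive (coef k)) (exp th))
    by (unfold moment; rewrite <- PSeries_incr_1;
        apply PSeries_ext; intros z; symmetry; apply coef_succ).
  apply (is_derive_comp (PSeries (coef k)) exp th); [|apply is_derive_exp].
  apply is_derive_PSeries. now apply abs_exp_lt_CV_radius.
Qed.

Definition weight (th : R) (z : nat) : R := coef 0 z * exp th ^ z.

Lemma weight_pos (th : R) (z : nat) : 0 < weight th z.
Proof.
  unfold weight, coef. apply Rmult_lt_0_compat; [|apply pow_lt, exp_pos].
  apply Rdiv_lt_0_compat; [lra | apply ffact_pos].
Qed.

Lemma moment0_ge_1 (th : R) : admissible th -> 1 <= moment 0 th.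
Proof.
  intros Hth. replace 1 with (weight th 0) by (unfold weight, coef; simpl; field).
  apply (is_series_ge_term _ _ 0 (is_series_moment 0 th Hth)).
  intros z. apply Rlt_le, weight_pos.
Qed.

Lemma moment1_pos (th : R) : admissible th -> 0 < moment 1 th.
Proof.
  intros Hth. apply (is_series_pos _ _ 1 (is_series_moment 1 th Hth)).
  - intros z. apply Rmult_le_pos; [apply coef_nonneg | apply pow_le, Rlt_le, exp_pos].
  - pose proof (weight_pos th 1). unfold weight, coef in *. simpl in *. lra.
Qed.

Lemma is_series_weight_pow (k : nat) (th : R) :
  admissible th -> is_series (fun z => weight th z * INR z ^ k) (moment k th).
Proof.
  intros Hth.
  apply (is_series_ext (fun z => coef k z * exp th ^ z)); [|now apply is_series_moment].
  intros z. unfold weight, coef. simpl. field. apply Rgt_not_eq, ffact_pos.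
Qed.

(* The shift identity [E f(w) g(w) = e^th E g(w + 1)], from [f(z+1)/f(z+1)! = 1/f(z)!]
   and [f(0) = 0]. *)
Lemma is_series_f_shift (g : nat -> R) (th l : R) :
  is_series (fun z => weight th z * g (S z)) l ->
  is_series (fun z => weight th z * f z * g z) (exp th * l).
Proof.
  intros Hg. apply is_series_decr_1.
  rewrite f_0, Rmult_0_r, Rmult_0_l.
  change (plus (exp th * l) (opp 0)) with (exp th * l + - 0). rewrite Ropp_0, Rplus_0_r.
  apply (is_series_ext (fun z => exp th * (weight th z * g (S z)))).
  - intros z. unfold weight, coef. simpl.
    field. split; [apply Rgt_not_eq, f_pos; lia | apply Rgt_not_eq, ffact_pos].
  - exact (is_series_scal_l (exp th) _ _ Hg).
Qed.

Lemma is_series_f_pow0 (th : R) :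
  admissible th -> is_series (fun z => weight th z * f z * INR z ^ 0) (exp th * moment 0 th).
Proof. intros Hth. apply is_series_f_shift. exact (is_series_weight_pow 0 th Hth). Qed.

Lemma is_series_f_pow1 (th : R) : admissible th ->
  is_series (fun z => weight th z * f z * INR z ^ 1) (exp th * (moment 1 th + moment 0 th)).
Proof.
  intros Hth. apply is_series_f_shift.
  replace (moment 1 th + moment 0 th) with (1 * moment 1 th + 1 * moment 0 th) by ring.
  apply (is_series_ext (fun z => 1 * (weight th z * INR z ^ 1) + 1 * (weight th z * INR z ^ 0))).
  - intros z. rewrite S_INR. simpl. ring.
  - apply is_series_lin2; now apply is_series_weight_pow.
Qed.

Lemma is_series_f_pow2 (th : R) : admissible th ->
  is_series (fun z => weight th z * f z * INR z ^ 2)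
            (exp th * (moment 2 th + 2 * moment 1 th + moment 0 th)).
Proof.
  intros Hth. apply is_series_f_shift.
  replace (moment 2 th + 2 * moment 1 th + moment 0 th)
    with (1 * moment 2 th + 2 * moment 1 th + 1 * moment 0 th) by ring.
  apply (is_series_ext (fun z => 1 * (weight th z * INR z ^ 2) + 2 * (weight th z * INR z ^ 1)
                                 + 1 * (weight th z * INR z ^ 0))).
  - intros z. rewrite S_INR. simpl. ring.
  - apply is_series_lin3; now apply is_series_weight_pow.
Qed.

Definition mean (th : R) : R := moment 1 th / moment 0 th.
Definition variance (th : R) : R := moment 2 th / moment 0 th - mean th ^ 2.
Definition cumulant3 (th : R) : R :=
  moment 3 th / moment 0 th - 3 * (moment 2 th / moment 0 th) * mean th + 2 * mean th ^ 3.

Lemma mean_pos (th : R) : admissible th -> 0 < mean th.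
Proof.
  intros Hth. apply Rdiv_lt_0_compat; [now apply moment1_pos|].
  pose proof (moment0_ge_1 th Hth). lra.
Qed.

Lemma variance_pos (th : R) : admissible th -> 0 < variance th.
Proof.
  intros Hth. pose proof (moment0_ge_1 th Hth). pose proof (mean_pos th Hth).
  set (m := mean th) in *.
  assert (Hsq : is_series (fun z => 1 * (weight th z * INR z ^ 2)
                                    + (-2 * m) * (weight th z * INR z ^ 1)
                                    + m ^ 2 * (weight th z * INR z ^ 0))
                          (1 * moment 2 th + (-2 * m) * moment 1 th + m ^ 2 * moment 0 th))
    by (apply is_series_lin3; now apply is_series_weight_pow).
  assert (Hval : 1 * moment 2 th + (-2 * m) * moment 1 th + m ^ 2 * moment 0 th
                 = moment 0 th * variance th)
    by (unfold variance, m, mean; field; lra).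
  rewrite Hval in Hsq.
  enough (0 < moment 0 th * variance th) by nra.
  apply (is_series_pos _ _ 0 Hsq).
  - intros z. pose proof (weight_pos th z).
    replace (1 * (weight th z * INR z ^ 2) + -2 * m * (weight th z * INR z ^ 1)
             + m ^ 2 * (weight th z * INR z ^ 0)) with (weight th z * (INR z - m) ^ 2) by ring.
    apply Rmult_le_pos; [lra | apply pow2_ge_0].
  - cbv beta. simpl INR. ring_simplify.
    apply Rmult_lt_0_compat; [apply weight_pos | apply pow_lt; lra].
Qed.

Lemma mean_derive (th : R) : admissible th -> is_derive mean th (variance th).
Proof.
  intros Hth. pose proof (moment0_ge_1 th Hth).
  replace (variance th)
    with ((moment 2 th * moment 0 th - moment 1 th * moment 1 th) / moment 0 th ^ 2)
    by (unfold variance, mean; field; lra).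
  apply is_derive_div; try apply moment_derive; auto; lra.
Qed.

Lemma variance_derive (th : R) : admissible th -> is_derive variance th (cumulant3 th).
Proof.
  intros Hth. pose proof (moment0_ge_1 th Hth).
  replace (cumulant3 th)
    with ((moment 3 th * moment 0 th - moment 2 th * moment 1 th) / moment 0 th ^ 2
          - INR 2 * variance th * mean th ^ 1)
    by (unfold cumulant3, variance, mean; simpl; field; lra).
  apply (is_derive_minus (fun t => moment 2 t / moment 0 t) (fun t => mean t ^ 2)).
  - apply is_derive_div; try apply moment_derive; auto; lra.
  - apply is_derive_pow, mean_derive, Hth.
Qed.

(** * The curvature of the flux *)

Definition curvature (th : R) : R := exp th * (variance th - cumulant3 th).
Definition slope (th : R) : R := exp th / variance th.
Definition intercept (th : R) : R := exp th - slope th * mean th.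

(* [f] minus its least-squares affine fit under [mu f th]: by the shift identity
   the covariance of [f(w)] and [w] is [e^th], hence the slope [e^th / variance]. *)
Definition residual (th : R) (z : nat) : R := f z - intercept th - slope th * INR z.

Lemma is_series_residual_pow (k : nat) (th l l' : R) : admissible th ->
  is_series (fun z => weight th z * f z * INR z ^ k) l ->
  l' = l - intercept th * moment k th - slope th * moment (S k) th ->
  is_series (fun z => weight th z * residual th z * INR z ^ k) l'.
Proof.
  intros Hth Hf ->.
  apply (is_series_ext (fun z => 1 * (weight th z * f z * INR z ^ k)
            + - intercept th * (weight th z * INR z ^ k)
            + - slope th * (weight th z * INR z ^ S k))).
  - intros z. unfold residual. simpl. ring.
  - replace (l - intercept th * moment k th - slope th * moment (S k) th)
      with (1 * l + - intercept th * moment k th + - slope th * moment (S k) th) by ring.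
    apply is_series_lin3; [assumption | now apply is_series_weight_pow ..].
Qed.

Lemma residual_moments (th : R) : admissible th ->
  is_series (fun z => weight th z * residual th z) 0 /\
  is_series (fun z => weight th z * residual th z * INR z) 0 /\
  is_series (fun z => weight th z * residual th z * INR z ^ 2)
            (moment 0 th * curvature th / variance th).
Proof.
  intros Hth. pose proof (moment0_ge_1 th Hth). pose proof (variance_pos th Hth).
  assert (Hmean : moment 1 th = moment 0 th * mean th) by (unfold mean; field; lra).
  assert (Hvar : moment 2 th = moment 0 th * (variance th + mean th ^ 2))
    by (unfold variance, mean; field; lra).
  assert (Hcum : moment 3 th = moment 0 th * (cumulant3 th
                                 + 3 * (variance th + mean th ^ 2) * mean th - 2 * mean th ^ 3))
    by (unfold cumulant3; rewrite Hvar; field; lra).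
  split; [|split].
  - apply (is_series_ext (fun z => weight th z * residual th z * INR z ^ 0));
      [intros z; simpl; ring|].
    apply (is_series_residual_pow 0 th _ _ Hth (is_series_f_pow0 th Hth)).
    rewrite Hmean. unfold intercept, slope. field. lra.
  - apply (is_series_ext (fun z => weight th z * residual th z * INR z ^ 1));
      [intros z; simpl; ring|].
    apply (is_series_residual_pow 1 th _ _ Hth (is_series_f_pow1 th Hth)).
    rewrite Hvar, Hmean. unfold intercept, slope. field. lra.
  - apply (is_series_residual_pow 2 th _ _ Hth (is_series_f_pow2 th Hth)).
    rewrite Hcum, Hvar, Hmean. unfold curvature, intercept, slope. field. lra.
Qed.

Lemma curvature_sign_of_convex_residual (c th : R) : admissible th -> c <> 0 ->
  fconvex (fun z => c * residual th z) -> (exists z, residual th z <> 0) -> 0 < c * curvature th.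
Proof.
  intros Hth Hc Hconv [z0 Hz0].
  destruct (residual_moments th Hth) as [M0 [M1 M2]].
  pose proof (moment0_ge_1 th Hth). pose proof (variance_pos th Hth).
  assert (Hpos : 0 < c * (moment 0 th * curvature th / variance th)).
  { apply (convex_orthogonal_second_moment_pos (weight th) (fun z => c * residual th z));
      [apply weight_pos | exact Hconv | | | | exists z0; apply Rmult_integral_contrapositive; auto].
    - apply (is_series_ext (fun z => c * (weight th z * residual th z)));
        [intros z; simpl; ring|].
      rewrite <- (Rmult_0_r c). exact (is_series_scal_l c _ _ M0).
    - apply (is_series_ext (fun z => c * (weight th z * residual th z * INR z)));
        [intros z; simpl; ring|].
      rewrite <- (Rmult_0_r c). exact (is_series_scal_l c _ _ M1).
    - apply (is_series_ext (fun z => c * (weight th z * residual th z * INR z ^ 2)));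
        [intros z; simpl; ring|].
      exact (is_series_scal_l c _ _ M2). }
  replace (c * (moment 0 th * curvature th / variance th))
    with (c * curvature th * (moment 0 th / variance th)) in Hpos by (field; lra).
  assert (0 < moment 0 th / variance th) by (apply Rdiv_lt_0_compat; lra).
  nra.
Qed.

Lemma residual_nonzero_of_not_linear (th : R) : ~ flinear f -> exists z, residual th z <> 0.
Proof.
  intros Hnl. apply NNPP. intros Hzero. apply Hnl. exists (slope th). intros z.
  assert (Hr : forall y, residual th y = 0)
    by (intros y; apply NNPP; intros Hy; apply Hzero; eauto).
  pose proof (Hr z) as Ez. pose proof (Hr 0%nat) as E0.
  unfold residual in Ez, E0. rewrite f_0 in E0. simpl in E0. lra.
Qed.

(* An affine residual is both convex and concave, so the sign lemma forces it to vanish. *)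
Lemma curvature_zero_of_linear (th : R) : admissible th -> flinear f -> curvature th = 0.
Proof.
  intros Hth [a Ha].
  assert (Haffine : forall c, fconvex (fun z => c * residual th z)).
  { intros c z. unfold residual. rewrite !Ha, !S_INR. lra. }
  destruct (classic (exists z, residual th z <> 0)) as [Hnz|Hzero].
  - pose proof (curvature_sign_of_convex_residual 1 th Hth ltac:(lra) (Haffine 1) Hnz).
    pose proof (curvature_sign_of_convex_residual (-1) th Hth ltac:(lra) (Haffine (-1)) Hnz).
    lra.
  - assert (Hr : forall z, residual th z = 0)
      by (intros z; apply NNPP; intros Hz; apply Hzero; eauto).
    destruct (residual_moments th Hth) as [M0 [_ M2]].
    assert (M2' : is_series (fun z => weight th z * residual th z * INR z ^ 2) 0).
    { apply (is_series_ext (fun z => weight th z * residual th z)); [|exact M0].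
      intros z. rewrite Hr. simpl. ring. }
    pose proof (moment0_ge_1 th Hth). pose proof (variance_pos th Hth).
    assert (Hval : moment 0 th * curvature th / variance th = 0)
      by (rewrite <- (is_series_unique _ _ M2); exact (is_series_unique _ _ M2')).
    replace (curvature th)
      with (moment 0 th * curvature th / variance th * (variance th / moment 0 th))
      by (field; lra).
    rewrite Hval. ring.
Qed.

Lemma curvature_pos_of_convex (th : R) :
  admissible th -> fconvex f -> ~ flinear f -> 0 < curvature th.
Proof.
  intros Hth Hconv Hnl.
  enough (0 < 1 * curvature th) by lra.
  apply curvature_sign_of_convex_residual;
    [exact Hth | lra | | now apply residual_nonzero_of_not_linear].
  intros z. cbv beta. unfold residual. rewrite !S_INR. specialize (Hconv z). lra.
Qed.

Lemma curvature_neg_of_concave (th : R) :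
  admissible th -> fconcave f -> ~ flinear f -> curvature th < 0.
Proof.
  intros Hth Hconc Hnl.
  enough (0 < -1 * curvature th) by lra.
  apply curvature_sign_of_convex_residual;
    [exact Hth | lra | | now apply residual_nonzero_of_not_linear].
  intros z. cbv beta. unfold residual. rewrite !S_INR. specialize (Hconc z). lra.
Qed.

(** * The mean as a function of [th] *)

Lemma mean_increasing (a b : R) : admissible b -> a < b -> mean a < mean b.
Proof.
  intros Hb Hab.
  apply (increasing_of_derive_pos mean variance); [exact Hab | |];
    intros x Hx; [apply mean_derive | apply variance_pos]; apply (admissible_le x b); auto; lra.
Qed.

Lemma mean_continuous (th : R) : admissible th -> continuity_pt mean th.
Proof.
  intros Hth. apply derivable_continuous_pt. exists (variance th).
  now apply is_derive_Reals, mean_derive.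
Qed.

Lemma moment1_shift_le (th d : R) : admissible th -> d <= 0 ->
  moment 1 (th + d) <= exp d * moment 1 th.
Proof.
  intros Hth Hd. unfold moment, PSeries. rewrite <- Series_scal_l. apply Series_le.
  - intros z. split; [apply Rmult_le_pos; [apply coef_nonneg | apply pow_le, Rlt_le, exp_pos]|].
    rewrite <- !exp_mul_INR. destruct z as [|z]; [unfold coef; simpl; lra|].
    replace ((th + d) * INR (S z)) with (th * INR (S z) + d * INR (S z)) by ring.
    rewrite exp_plus.
    assert (exp (d * INR (S z)) <= exp d).
    { apply exp_le_compat. rewrite S_INR. pose proof (pos_INR z). nra. }
    pose proof (coef_nonneg 1 (S z)). pose proof (exp_pos (th * INR (S z))).
    assert (0 <= coef 1 (S z) * exp (th * INR (S z))) by (apply Rmult_le_pos; lra).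
    nra.
  - exact (ex_series_scal_l (exp d) _ (ex_intro _ _ (is_series_moment 1 th Hth))).
Qed.

Lemma mean_small (r : R) : 0 < r -> exists th, admissible th /\ mean th < r.
Proof.
  intros Hr. set (th0 := ln (f 1%nat) - 1).
  assert (Hth0 : admissible th0) by (apply admissible_lt_ln_f1; unfold th0; lra).
  pose proof (moment1_pos th0 Hth0) as HS.
  set (y := 2 * moment 1 th0 / r).
  assert (Hy : 0 < y) by (apply Rdiv_lt_0_compat; lra).
  assert (Hexp : exp (- y) < / y).
  { rewrite exp_Ropp. pose proof (exp_ineq1_le y).
    apply Rinv_lt_contravar; [pose proof (exp_pos y); nra | lra]. }
  assert (Hth : admissible (th0 + - y)) by (apply (admissible_le _ th0); auto; lra).
  exists (th0 + - y). split; [exact Hth|].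
  pose proof (moment1_shift_le th0 (- y) Hth0 ltac:(lra)).
  pose proof (moment0_ge_1 _ Hth). pose proof (moment1_pos _ Hth).
  assert (Hhalf : / y * moment 1 th0 = r / 2) by (unfold y; field; lra).
  assert (mean (th0 + - y) <= moment 1 (th0 + - y)).
  { unfold mean, Rdiv. rewrite <- (Rmult_1_r (moment 1 (th0 + - y))) at 2.
    apply Rmult_le_compat_l; [lra|]. rewrite <- Rinv_1. apply Rinv_le_contravar; lra. }
  nra.
Qed.

Lemma mean_ge_of_head_mass (th : R) (N : nat) : admissible th ->
  2 * sum_f_R0 (weight th) N <= moment 0 th -> INR (S N) / 2 <= mean th.
Proof.
  intros Hth Hhead.
  assert (W1 : is_series (fun z => weight th z * INR z) (moment 1 th)).
  { apply (is_series_ext (fun z => weight th z * INR z ^ 1)); [intros z; simpl; ring|].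
    now apply is_series_weight_pow. }
  pose proof (is_series_tail _ _ N (is_series_moment 0 th Hth)) as T0.
  pose proof (is_series_tail _ _ N W1) as T1.
  assert (Htail : INR (S N) * (moment 0 th - sum_f_R0 (weight th) N)
                  <= moment 1 th - sum_f_R0 (fun z => weight th z * INR z) N).
  { pose proof (is_series_lin2 _ _ _ _ 1 (- INR (S N)) T1 T0) as D.
    apply is_series_nonneg in D; [unfold weight in *; lra|].
    intros k. cbv beta. rewrite plus_INR. pose proof (pos_INR k).
    pose proof (weight_pos th (S N + k)). unfold weight in *. nra. }
  assert (0 <= sum_f_R0 (fun z => weight th z * INR z) N).
  { apply cond_pos_sum. intros z. pose proof (weight_pos th z). pose proof (pos_INR z). nra. }
  pose proof (moment0_ge_1 th Hth). pose proof (pos_INR (S N)).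
  unfold mean. apply Rmult_le_reg_r with (moment 0 th); [lra|].
  replace (moment 1 th / moment 0 th * moment 0 th) with (moment 1 th) by (field; lra).
  nra.
Qed.

Lemma ffact_le_pow_exp (t : R) : thetabar f = Finite t -> forall z, ffact f z <= exp t ^ z.
Proof.
  intros Ht z. induction z as [|z IH]; simpl; [lra|].
  assert (Hf : f (S z) <= exp t).
  { pose proof (ln_f_le_thetabar (S z) ltac:(lia)) as Hln. rewrite Ht in Hln. simpl in Hln.
    rewrite <- (exp_ln (f (S z))) by (apply f_pos; lia). now apply exp_le_compat. }
  pose proof (ffact_pos z). pose proof (f_pos (S z) ltac:(lia)).
  rewrite Rmult_comm. apply Rmult_le_compat; lra.
Qed.

(* With [e^th = q e^t] and [f <= e^t], the partition function is at least [1/(1-q)]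
   while the first [N + 1] weights stay bounded as [q -> 1]. *)
Lemma head_mass_small_finite (t : R) (N : nat) : thetabar f = Finite t ->
  exists th, admissible th /\ 2 * sum_f_R0 (weight th) N <= moment 0 th.
Proof.
  intros Ht. set (L := exp t). pose proof (exp_pos t) as HL. fold L in HL.
  set (C := sum_f_R0 (fun z => coef 0 z * L ^ z) N).
  assert (HC : 0 <= C)
    by (apply cond_pos_sum; intros z;
        apply Rmult_le_pos; [apply coef_nonneg | apply pow_le; lra]).
  set (q := 1 - / (2 * C + 2)).
  assert (Hq : 0 < q < 1).
  { unfold q. assert (0 < / (2 * C + 2) <= / 2) by
      (split; [apply Rinv_0_lt_compat | apply Rinv_le_contravar]; lra). lra. }
  assert (Hexp : exp (t + ln q) = L * q) by (rewrite exp_plus, exp_ln; [reflexivity | lra]).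
  assert (Hth : admissible (t + ln q)).
  { unfold admissible. rewrite Ht. simpl. assert (ln q < ln 1) by (apply ln_increasing; lra).
    rewrite ln_1 in *. lra. }
  exists (t + ln q). split; [exact Hth|].
  assert (Hhead : sum_f_R0 (weight (t + ln q)) N <= C).
  { apply sum_Rle. intros z _. unfold weight. rewrite Hexp, Rpow_mult_distr.
    apply Rmult_le_compat_l; [apply coef_nonneg|].
    rewrite <- (Rmult_1_r (L ^ z)) at 2. apply Rmult_le_compat_l; [apply pow_le; lra|].
    rewrite <- (pow1 z). apply pow_incr. lra. }
  assert (Htotal : / (1 - q) <= moment 0 (t + ln q)).
  { rewrite <- Series_geom by (rewrite Rabs_pos_eq; lra).
    apply Series_le; [|exact (ex_intro _ _ (is_series_moment 0 _ Hth))].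
    intros z. split; [apply pow_le; lra|].
    rewrite Hexp, Rpow_mult_distr. unfold coef.
    pose proof (ffact_le_pow_exp t Ht z) as Hz. fold L in Hz.
    pose proof (ffact_pos z). pose proof (pow_lt q z ltac:(lra)).
    apply Rmult_le_reg_r with (ffact f z); [lra|].
    replace (INR z ^ 0 / ffact f z * (L ^ z * q ^ z) * ffact f z) with (q ^ z * L ^ z)
      by (simpl; field; lra).
    nra. }
  replace (/ (1 - q)) with (2 * C + 2) in Htotal by (unfold q; field; lra).
  lra.
Qed.

Lemma head_mass_small_infinite (N : nat) : thetabar f = p_infty ->
  exists th, admissible th /\ 2 * sum_f_R0 (weight th) N <= moment 0 th.
Proof.
  intros Ht. set (C := sum_f_R0 (coef 0) N).
  assert (HC : 0 <= C) by (apply cond_pos_sum; intros; apply coef_nonneg).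
  pose proof (ffact_pos (S N)) as HF.
  set (x := 1 + 2 * C * ffact f (S N)).
  assert (Hx : 1 <= x) by (unfold x; nra).
  assert (Hth : admissible (ln x)) by (unfold admissible; rewrite Ht; exact I).
  assert (Hexp : exp (ln x) = x) by (apply exp_ln; lra).
  exists (ln x). split; [exact Hth|].
  assert (Hhead : sum_f_R0 (weight (ln x)) N <= x ^ N * C).
  { unfold C. rewrite scal_sum. apply sum_Rle. intros z Hz. unfold weight. rewrite Hexp.
    apply Rmult_le_compat_l; [apply coef_nonneg | now apply Rle_pow]. }
  assert (Hterm : weight (ln x) (S N) <= moment 0 (ln x))
    by (apply (is_series_ge_term _ _ _ (is_series_moment 0 _ Hth));
        intros; apply Rlt_le, weight_pos).
  assert (Hweight : weight (ln x) (S N) = x * x ^ N / ffact f (S N))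
    by (unfold weight, coef; rewrite Hexp; change (x ^ S N) with (x * x ^ N); field; lra).
  assert (2 * (x ^ N * C) <= x * x ^ N / ffact f (S N)).
  { apply Rmult_le_reg_r with (ffact f (S N)); [lra|].
    replace (x * x ^ N / ffact f (S N) * ffact f (S N)) with (x * x ^ N) by (field; lra).
    assert (0 <= x ^ N) by (apply pow_le; lra).
    assert (2 * C * ffact f (S N) <= x) by (unfold x; lra). nra. }
  lra.
Qed.

Lemma exists_head_mass_small (N : nat) :
  exists th, admissible th /\ 2 * sum_f_R0 (weight th) N <= moment 0 th.
Proof.
  destruct (thetabar f) as [t| |] eqn:Ht.
  - now apply (head_mass_small_finite t).
  - now apply head_mass_small_infinite.
  - pose proof (ln_f_le_thetabar 1 ltac:(lia)) as H. rewrite Ht in H. contradiction.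
Qed.

Lemma mean_large (r : R) : exists th, admissible th /\ r < mean th.
Proof.
  destruct (INR_unbounded (2 * r)) as [N HN].
  destruct (exists_head_mass_small N) as [th [Hth Hhead]].
  exists th. split; [exact Hth|].
  pose proof (mean_ge_of_head_mass th N Hth Hhead). rewrite S_INR in *. lra.
Qed.

Lemma mean_surjective (r : R) : 0 < r -> exists th, admissible th /\ mean th = r.
Proof.
  intros Hr.
  destruct (mean_small r Hr) as [a [Ha Hra]]. destruct (mean_large r) as [b [Hb Hrb]].
  assert (Hab : a < b).
  { destruct (Rlt_le_dec a b) as [|[Hba|Hba]]; [assumption | | subst; lra].
    pose proof (mean_increasing b a Ha Hba). lra. }
  destruct (IVT_interv (fun th => mean th - r) a b) as [c [Hc Ec]]; [| exact Hab | lra | lra |].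
  - intros c Hc.
    apply continuity_pt_minus; [|apply continuity_pt_const; intros ? ?; reflexivity].
    apply mean_continuous, (admissible_le c b); auto; lra.
  - exists c. split; [apply (admissible_le c b); auto; lra | lra].
Qed.

(** * The flux *)

Lemma Zpart_moment (th : R) : Zpart f th = moment 0 th.
Proof.
  unfold Zpart, moment, PSeries. apply Series_ext. intros z.
  rewrite exp_mul_INR. unfold coef. simpl. field. apply Rgt_not_eq, ffact_pos.
Qed.

Lemma mu_weight (th : R) (z : nat) : admissible th -> mu f th z = weight th z / moment 0 th.
Proof.
  intros Hth. pose proof (moment0_ge_1 th Hth). pose proof (ffact_pos z).
  unfold mu. rewrite Zpart_moment, exp_mul_INR. unfold weight, coef. simpl. field. lra.
Qed.

Lemma rho_of_mean (th : R) : admissible th -> rho_of f th = mean th.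
Proof.
  intros Hth. pose proof (moment0_ge_1 th Hth).
  unfold rho_of. apply is_series_unique.
  apply (is_series_ext (fun z => / moment 0 th * (weight th z * INR z ^ 1))).
  - intros z. rewrite mu_weight by exact Hth. simpl. field. lra.
  - replace (mean th) with (/ moment 0 th * moment 1 th) by (unfold mean; field; lra).
    exact (is_series_scal_l _ _ _ (is_series_weight_pow 1 th Hth)).
Qed.

Lemma expected_f (th : R) : admissible th -> Series (fun z => f z * mu f th z) = exp th.
Proof.
  intros Hth. pose proof (moment0_ge_1 th Hth). apply is_series_unique.
  apply (is_series_ext (fun z => / moment 0 th * (weight th z * f z * INR z ^ 0))).
  - intros z. rewrite mu_weight by exact Hth. simpl. field. lra.
  - replace (exp th) with (/ moment 0 th * (exp th * moment 0 th)) by (field; lra).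
    exact (is_series_scal_l _ _ _ (is_series_f_pow0 th Hth)).
Qed.

Lemma theta_of_spec (r : R) : 0 < r -> admissible (theta_of f r) /\ mean (theta_of f r) = r.
Proof.
  intros Hr. unfold theta_of.
  destruct (epsilon_spec (inhabits 0) (fun th => Rbar_lt th (thetabar f) /\ rho_of f th = r))
    as [Hth Hrho].
  - destruct (mean_surjective r Hr) as [th [Hth E]]. exists th. split; [exact Hth|].
    now rewrite rho_of_mean.
  - split; [exact Hth|]. now rewrite <- rho_of_mean.
Qed.

Lemma theta_of_increasing (r1 r2 : R) : 0 < r1 -> r1 < r2 -> theta_of f r1 < theta_of f r2.
Proof.
  intros H1 H12. destruct (theta_of_spec r1 H1) as [U1 E1].
  destruct (theta_of_spec r2 ltac:(lra)) as [U2 E2].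
  destruct (Rlt_le_dec (theta_of f r1) (theta_of f r2)) as [|[Hlt|Heq]]; [assumption| |].
  - pose proof (mean_increasing _ _ U1 Hlt). lra.
  - rewrite Heq in E2. lra.
Qed.

Lemma theta_of_continuous (r : R) : 0 < r -> continuity_pt (theta_of f) r.
Proof.
  intros Hr.
  destruct (theta_of_spec (r / 2) ltac:(lra)) as [Ua Ea].
  destruct (theta_of_spec (2 * r) ltac:(lra)) as [Ub Eb].
  apply (continuity_pt_recip_interv mean (theta_of f)
           (theta_of f (r / 2)) (theta_of f (2 * r))).
  - apply theta_of_increasing; lra.
  - intros x y Hx Hxy Hy. apply mean_increasing; [|assumption].
    now apply (admissible_le _ (theta_of f (2 * r))).
  - intros x Hx Hy. rewrite Ea in Hx. unfold comp, id. apply theta_of_spec. lra.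
  - intros x Hx Hy. rewrite Ea in Hx. rewrite Eb in Hy.
    split; [destruct (Req_dec x (r / 2)) | destruct (Req_dec x (2 * r))];
      try (subst; lra); left; apply theta_of_increasing; lra.
  - intros a Ha. apply mean_continuous, (admissible_le _ (theta_of f (2 * r))); auto; lra.
  - rewrite Ea, Eb. lra.
Qed.

Lemma theta_of_derive (r : R) : 0 < r -> is_derive (theta_of f) r (/ variance (theta_of f r)).
Proof.
  intros Hr.
  destruct (theta_of_spec (r / 2) ltac:(lra)) as [Ua Ea].
  destruct (theta_of_spec (2 * r) ltac:(lra)) as [Ub Eb].
  destruct (theta_of_spec r Hr) as [Hth _].
  assert (Hdiff : forall a,
            theta_of f (r / 2) <= a <= theta_of f (2 * r) -> derivable_pt mean a).
  { intros a Ha. exists (variance a). apply is_derive_Reals, mean_derive.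
    apply (admissible_le _ (theta_of f (2 * r))); auto; lra. }
  assert (Hbetween : theta_of f (r / 2) <= theta_of f r <= theta_of f (2 * r))
    by (split; left; apply theta_of_increasing; lra).
  assert (Hder : derive_pt mean (theta_of f r) (Hdiff _ Hbetween) = variance (theta_of f r))
    by (apply derive_pt_eq_0, is_derive_Reals, mean_derive, Hth).
  apply is_derive_Reals. rewrite <- Rdiv_1_l, <- Hder.
  apply (derivable_pt_lim_recip_interv mean (theta_of f) (r / 2) (2 * r) r Hdiff);
    [now apply theta_of_continuous | lra | lra | |].
  - intros x Hx. unfold comp, id. apply theta_of_spec. lra.
  - rewrite Hder. apply Rgt_not_eq, variance_pos, Hth.
Qed.

Lemma Hflux_exp_theta (r : R) : 0 < r -> Hflux f r = exp (theta_of f r).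
Proof. intros Hr. apply expected_f, theta_of_spec, Hr. Qed.

Definition dHflux (r : R) : R := exp (theta_of f r) / variance (theta_of f r).
Definition d2Hflux (r : R) : R := curvature (theta_of f r) / variance (theta_of f r) ^ 3.

Lemma Hflux_derive (r : R) : 0 < r -> is_derive (Hflux f) r (dHflux r).
Proof.
  intros Hr. destruct (theta_of_spec r Hr) as [Hth _]. pose proof (variance_pos _ Hth).
  apply (is_derive_ext_loc (fun t => exp (theta_of f t))).
  - apply (filter_imp (fun t => 0 < t)); [|exact (open_gt 0 r Hr)].
    intros t Ht. symmetry. now apply Hflux_exp_theta.
  - replace (dHflux r) with (/ variance (theta_of f r) * exp (theta_of f r))
      by (unfold dHflux; field; lra).
    apply (is_derive_comp exp (theta_of f)); [apply is_derive_exp | now apply theta_of_derive].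
Qed.

Lemma dHflux_derive (r : R) : 0 < r -> is_derive dHflux r (d2Hflux r).
Proof.
  intros Hr. destruct (theta_of_spec r Hr) as [Hth _].
  pose proof (variance_pos _ Hth). set (th := theta_of f r) in *.
  replace (d2Hflux r)
    with (/ variance th * ((exp th * variance th - exp th * cumulant3 th) / variance th ^ 2))
    by (unfold d2Hflux, curvature; fold th; field; lra).
  apply (is_derive_comp (fun t => exp t / variance t) (theta_of f));
    [|now apply theta_of_derive].
  apply is_derive_div; [apply is_derive_exp | now apply variance_derive | lra].
Qed.

Lemma is_derive_n_Hflux (r : R) : 0 < r -> is_derive_n (Hflux f) 2 r (d2Hflux r).
Proof.
  intros Hr. simpl. apply (is_derive_ext_loc dHflux); [|now apply dHflux_derive].
  apply (filter_imp (fun t => 0 < t)); [|exact (open_gt 0 r Hr)].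
  intros t Ht. symmetry. now apply is_derive_unique, Hflux_derive.
Qed.

Lemma Derive_n_2_Hflux (r : R) : 0 < r -> Derive_n (Hflux f) 2 r = d2Hflux r.
Proof. intros Hr. now apply is_derive_n_unique, is_derive_n_Hflux. Qed.

Lemma d2Hflux_zero_of_linear (r : R) : 0 < r -> flinear f -> d2Hflux r = 0.
Proof.
  intros Hr Hl. destruct (theta_of_spec r Hr) as [Hth _].
  unfold d2Hflux. rewrite (curvature_zero_of_linear _ Hth Hl). unfold Rdiv. ring.
Qed.

Lemma Hflux_convex : fconvex f ->
  convex_pos (Hflux f) /\ ((forall r, 0 < r -> 0 < Derive_n (Hflux f) 2 r) <-> ~ flinear f).
Proof.
  intros Hconv.
  assert (Hpos : forall r, 0 < r -> ~ flinear f -> 0 < d2Hflux r).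
  { intros r Hr Hnl. destruct (theta_of_spec r Hr) as [Hth _].
    apply Rdiv_lt_0_compat;
      [now apply curvature_pos_of_convex | apply pow_lt, variance_pos, Hth]. }
  split; [|split].
  - apply (convex_pos_of_derive2 _ dHflux d2Hflux);
      [exact Hflux_derive | exact dHflux_derive |].
    intros r Hr. destruct (classic (flinear f)) as [Hl|Hnl].
    + rewrite (d2Hflux_zero_of_linear r Hr Hl). lra.
    + now apply Rlt_le, Hpos.
  - intros Hall Hl. specialize (Hall 1 Rlt_0_1).
    rewrite Derive_n_2_Hflux, d2Hflux_zero_of_linear in Hall; auto; lra.
  - intros Hnl r Hr. rewrite Derive_n_2_Hflux by exact Hr. now apply Hpos.
Qed.

Lemma Hflux_concave : fconcave f ->
  concave_pos (Hflux f) /\ ((forall r, 0 < r -> Derive_n (Hflux f) 2 r < 0) <-> ~ flinear f).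
Proof.
  intros Hconc.
  assert (Hneg : forall r, 0 < r -> ~ flinear f -> d2Hflux r < 0).
  { intros r Hr Hnl. destruct (theta_of_spec r Hr) as [Hth _].
    pose proof (curvature_neg_of_concave _ Hth Hconc Hnl) as Hc.
    pose proof (Rinv_0_lt_compat _ (pow_lt _ 3 (variance_pos _ Hth))) as HV.
    unfold d2Hflux, Rdiv. nra. }
  split; [|split].
  - apply (concave_pos_of_derive2 _ dHflux d2Hflux);
      [exact Hflux_derive | exact dHflux_derive |].
    intros r Hr. destruct (classic (flinear f)) as [Hl|Hnl].
    + rewrite (d2Hflux_zero_of_linear r Hr Hl). lra.
    + now apply Rlt_le, Hneg.
  - intros Hall Hl. specialize (Hall 1 Rlt_0_1).
    rewrite Derive_n_2_Hflux, d2Hflux_zero_of_linear in Hall; auto; lra.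
  - intros Hnl r Hr. rewrite Derive_n_2_Hflux by exact Hr. now apply Hneg.
Qed.

End Flux.

Theorem propositionC1 (f : nat -> R)
  (f_mono : forall z : nat, f z <= f (S z))
  (f_0 : f 0%nat = 0)
  (f_pos : forall z : nat, (0 < z)%nat -> 0 < f z) :
  (forall r : R, 0 < r -> ex_derive_n (Hflux f) 2 r) /\
  (fconvex f ->
     convex_pos (Hflux f) /\
     ((forall r : R, 0 < r -> 0 < Derive_n (Hflux f) 2 r) <-> ~ flinear f)) /\
  (fconcave f ->
     concave_pos (Hflux f) /\
     ((forall r : R, 0 < r -> Derive_n (Hflux f) 2 r < 0) <-> ~ flinear f)).
Proof.
  split; [|split].
  - intros r Hr. exists (d2Hflux f r). now apply is_derive_n_Hflux.
  - now apply Hflux_convex.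
  - now apply Hflux_concave.
Qed.
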